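(* Let $n\ge2$ and $f\in\mathbf{SB}_n$ with $\mathcal{AI}(f)=\lceil n/2\rceil$. Then $\deg(f)\ge 2^{\lfloor\log_2(n-1)\rfloor}$.
   Context: $\mathbf{SB}_n$ is the set of symmetric Boolean functions on $n$ variables; $\deg$ is the algebraic degree. The algebraic immunity is $\mathcal{AI}(f)=\min\{\deg(g): g\neq0,\ gf=0 \text{ or } g(f+1)=0\}$. *)

From mathcomp Require Import all_boot fingroup perm.
Set Implicit Arguments. Unset Strict Implicit. Unset Printing Implicit Defensive.

Definition bvec (n : nat) := {ffun 'I_n -> bool}.
Definition boolfun (n : nat) := {ffun bvec n -> bool}.

Definition symmetricb n (f : boolfun n) : Prop :=
  forall (s : 'S_n) (x : bvec n), f [ffun i => x (s i)] = f x.

Definition bvec_le n (x u : bvec n) : bool := [forall i, x i ==> u i].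

Definition wt n (u : bvec n) : nat := #|[pred i | u i]|.

(* ANF coefficient of the monomial x^u (Moebius transform over F_2):
   f(x) = XOR_u anf f u * x^u  with  anf f u = XOR_{x <= u} f x. *)
Definition anf n (f : boolfun n) (u : bvec n) : bool :=
  \big[addb/false]_(x : bvec n | bvec_le x u) f x.

(* Algebraic degree: max weight of a monomial in the ANF (0 for f = 0). *)
Definition deg n (f : boolfun n) : nat :=
  \max_(u : bvec n | anf f u) wt u.

Definition annihilates n (g f : boolfun n) : bool := [forall x, ~~ (g x && f x)].

Definition fcompl n (f : boolfun n) : boolfun n := [ffun x => ~~ f x].

(* Algebraic immunity: min deg g over nonzero g with gf = 0 or g(f+1) = 0.
   The index set is always nonempty (g = f+1 or g = f works), so the
   default value n of the min is never used. *)
Definition AI n (f : boolfun n) : nat :=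
  \big[minn/n]_(g : boolfun n |
      (g != [ffun => false]) && (annihilates g f || annihilates g (fcompl f)))
    deg g.

From mathcomp Require Import all_boot fingroup perm.
Set Implicit Arguments. Unset Strict Implicit. Unset Printing Implicit Defensive.

(* A symmetric f is determined by its weight profile G, with
   f x = G (wt x), and the ANF coefficient of x^u is the parity of the
   binomial transform  binsum k G = \sum_i 'C(k, i) G i  at k = wt u
   (anf_weight); so deg f is the largest k <= n with binsum k G odd.

   Put P = 2^t with t = trunc_log 2 (n - 1), so P <= n - 1, and assume
   deg f < P.  Lucas' theorem modulo 2, in the additive form
   binsum_shift_pow2, shows that the transform of G(. + P) + G is even,
   hence (the transform being unitriangular) G is P-periodic on [0, n].
   A P-periodic profile gives AI f <= P / 2 (AI_periodic): either G takes
   equal values at some r and r + P/2, and then the indicator of the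
   weights = r mod P/2 annihilates f or f + 1 and has degree < P/2; or G
   is P/2-antiperiodic, and then deg f <= P/2.  As P/2 < uphalf n, this
   contradicts AI f = uphalf n. *)

(* Binomial transform of a sequence of naturals; only its parity matters. *)
Definition binsum (k : nat) (F : nat -> nat) : nat :=
  \sum_(i < k.+1) 'C(k, i) * F i.

Lemma eq_binsum k F1 F2 :
  (forall i, i <= k -> F1 i = F2 i) -> binsum k F1 = binsum k F2.
Proof. by move=> eqF; apply: eq_bigr => i _; rewrite eqF // -ltnS. Qed.

Lemma binsumD k F1 F2 :
  binsum k (fun i => F1 i + F2 i) = binsum k F1 + binsum k F2.
Proof. by rewrite /binsum -big_split; apply: eq_bigr => i _; rewrite mulnDr. Qed.

(* Pascal's rule, summed. *)
Lemma binsumS k F : binsum k.+1 F = binsum k F + binsum k (fun i => F i.+1).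
Proof.
rewrite /binsum big_ord_recl bin0 mul1n.
rewrite [in RHS]big_ord_recl bin0 mul1n -addnA; congr (_ + _).
rewrite (eq_bigr (fun i : 'I_k.+1 => 'C(k, i.+1) * F i.+1 + 'C(k, i) * F i.+1));
  last by move=> i _; rewrite /bump /= binS mulnDl.
by rewrite big_split big_ord_recr /= bin_small // mul0n addn0.
Qed.

(* Additive form of Lucas' theorem for the modulus 2 and a power of 2. *)
Lemma binsum_shift_pow2 s k F :
  odd (binsum (k + 2 ^ s) F) =
  odd (binsum k (fun i => F (i + 2 ^ s))) (+) odd (binsum k F).
Proof.
elim: s k F => [|s IH] k F.
  rewrite expn0 addn1 binsumS oddD addbC; congr (odd _ (+) _).
  by apply: eq_binsum => i _; rewrite addn1.
rewrite expnS mul2n -addnn addnA IH IH (IH k F) addbA.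
rewrite -[X in X (+) odd (binsum k F)]addbA addbb addbF.
by congr (odd _ (+) _); apply: eq_binsum => i _; rewrite addnA.
Qed.

Lemma binsum_periodic_even s k F :
  (forall i, F (i + 2 ^ s) = F i) -> ~~ odd (binsum (k + 2 ^ s) F).
Proof.
by move=> perF; rewrite binsum_shift_pow2 (eq_binsum (F2 := F)) ?addbb.
Qed.

Lemma binsum1 k : binsum k (fun _ => 1) = 2 ^ k.
Proof.
elim: k => [|k IH]; first by rewrite /binsum big_ord1.
by rewrite binsumS IH expnS mul2n addnn.
Qed.

(* The transform is unitriangular: if it is even up to M, so is F. *)
Lemma binsum_even_inv M F : (forall k, k <= M -> ~~ odd (binsum k F)) ->
  forall w, w <= M -> ~~ odd (F w).
Proof.
move=> evenS; elim/ltn_ind => w IH le_wM.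
have := evenS w le_wM; rewrite /binsum big_ord_recr /= binn mul1n oddD.
rewrite (big_morph _ oddD (erefl (odd 0))) big1 // => i _.
rewrite oddM (negbTE (IH _ _ _)) ?andbF //.
exact: leq_trans (ltnW (ltn_ord i)) le_wM.
Qed.

Lemma modn_pow2S w s : w %% 2 ^ s.+1 = odd (w %/ 2 ^ s) * 2 ^ s + w %% 2 ^ s.
Proof.
have dvd2 : 2 ^ s %| 2 ^ s.+1 by rewrite expnS dvdn_mull.
rewrite {1}(divn_eq (w %% 2 ^ s.+1) (2 ^ s)) modn_dvdm // divn_modl //.
by rewrite expnS mulnK ?expn_gt0 // modn2.
Qed.

Lemma wtE n (x : bvec n) : wt x = count x (enum 'I_n).
Proof.
rewrite /wt cardE /enum_mem size_filter count_filter.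
by apply: eq_count => i; rewrite /= !inE andbT.
Qed.

Lemma wt_le n (x : bvec n) : wt x <= n.
Proof. by rewrite /wt; apply: leq_trans (max_card _) _; rewrite card_ord. Qed.

Definition lowvec n k : bvec n := [ffun i : 'I_n => i < k].

Lemma wt_lowvec n k : k <= n -> wt (lowvec n k) = k.
Proof.
move=> le_kn; have count_iota : count (fun m => m < k) (iota 0 n) = k.
  rewrite -(subnKC le_kn) iotaD count_cat add0n.
  rewrite (eq_in_count (a2 := predT)); last by move=> m; rewrite mem_iota.
  rewrite count_predT size_iota (eq_in_count (a2 := pred0)) ?count_pred0 ?addn0 //.
  by move=> m; rewrite mem_iota => /andP[le_km _]; rewrite /= ltnNge le_km.
rewrite wtE -[RHS]count_iota -val_enum_ord count_map.
by apply: eq_count => i; rewrite /= ffunE.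
Qed.

(* A symmetric function only depends on the Hamming weight: two vectors of
   equal weight are permutations of each other. *)
Lemma symmetric_wt n (f : boolfun n) : symmetricb f ->
  forall x y, wt x = wt y -> f x = f y.
Proof.
move=> symf x y eq_wt.
pose tup (z : bvec n) := [tuple z i | i < n].
have count_tup z b : count_mem b (tup z) = if b then wt z else n - wt z.
  rewrite /= count_map wtE; case: b.
    by apply: eq_count => i /=; case: (z i).
  have := count_predC z (enum 'I_n); rewrite size_enum_ord => count_n.
  rewrite -[n in n - _]count_n addKn.
  by apply: eq_count => i /=; case: (z i).
have /tuple_permP[s eq_xy] : perm_eq (tup x) (tup y).
  by apply/allP => b _; rewrite /= !count_tup eq_wt.
have -> : x = [ffun i => y (s i)].
  apply/ffunP => i; rewrite ffunE.
  have := congr1 (fun t : seq bool => nth false t i) eq_xy.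
  by rewrite -!tnth_nth !tnth_mktuple.
exact: symf.
Qed.

Lemma card_below_wt n (u : bvec n) j :
  #|[set x : bvec n | bvec_le x u && (wt x == j)]| = 'C(wt u, j).
Proof.
pose supp (x : bvec n) : {set 'I_n} := [set i | x i].
have supp_inj : injective supp.
  move=> x y eq_supp; apply/ffunP => i.
  by have := congr1 (fun A : {set 'I_n} => i \in A) eq_supp; rewrite !inE.
rewrite -(card_imset _ supp_inj).
have -> : wt u = #|[set i | u i]| by rewrite cardsE.
rewrite -cards_draws; apply: eq_card => A; rewrite !inE.
apply/imsetP/andP => [[x]|[sub_Au card_A]].
  rewrite inE => /andP[le_xu /eqP <-] ->; split; last by rewrite /wt cardsE.
  by apply/subsetP => i; rewrite !inE; move/forallP: le_xu => /(_ i) /implyP.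
exists [ffun i => i \in A]; last by apply/setP => i; rewrite !inE ffunE.
rewrite inE -(eqP card_A) /wt; apply/andP; split.
  apply/forallP => i; rewrite ffunE; apply/implyP => Ai.
  by have := subsetP sub_Au i Ai; rewrite inE.
by apply/eqP; apply: eq_card => i; rewrite inE ffunE.
Qed.

(* ANF of a function of the weight: the Moebius sum groups by weight. *)
Lemma anf_weight n (g : boolfun n) (H : nat -> bool) :
  (forall x, g x = H (wt x)) -> forall u, anf g u = odd (binsum (wt u) H).
Proof.
move=> gH u; have wt_lt x : wt x < n.+1 := wt_le x.
rewrite /anf (eq_bigr (fun x => H (wt x))) //.
have -> : \big[addb/false]_(x | bvec_le x u) H (wt x) =
          odd (\sum_(x | bvec_le x u) nat_of_bool (H (wt x))).
  by rewrite (big_morph _ oddD (erefl (odd 0))); apply: eq_bigr => x _; rewrite oddb.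
rewrite (partition_big (fun x => (inord (wt x) : 'I_n.+1)) predT) //=.
rewrite /binsum (big_ord_widen n.+1 (fun j => 'C(wt u, j) * H j)) ?wt_lt //.
congr odd; rewrite [RHS]big_mkcond; apply: eq_bigr => j _.
rewrite (eq_bigr (fun _ => nat_of_bool (H j))); last first.
  by move=> x /andP[_ /eqP <-]; rewrite inordK.
rewrite (eq_bigl (fun x => bvec_le x u && (wt x == j))); last first.
  by move=> x; rewrite -val_eqE /= inordK.
rewrite sum_nat_cond_const card_below_wt.
by case: ltnP => // le_u_j; rewrite bin_small.
Qed.

Lemma deg_weight_le n (g : boolfun n) (H : nat -> bool) d :
  (forall x, g x = H (wt x)) ->
  (forall k, d < k -> k <= n -> ~~ odd (binsum k H)) -> deg g <= d.
Proof.
move=> gH evenH; apply/bigmax_leqP => u; rewrite (anf_weight gH) => odd_u.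
by rewrite leqNgt; apply: contraL odd_u => lt_du; apply: evenH; rewrite ?wt_le.
Qed.

Lemma deg_weight_ge n (g : boolfun n) (H : nat -> bool) k :
  (forall x, g x = H (wt x)) -> k <= n -> odd (binsum k H) -> k <= deg g.
Proof.
move=> gH le_kn odd_k; rewrite -{1}(wt_lowvec le_kn).
by apply: leq_bigmax_cond; rewrite (anf_weight gH) wt_lowvec.
Qed.

Lemma AI_le n (f g : boolfun n) : g != [ffun => false] ->
  annihilates g f || annihilates g (fcompl f) -> AI f <= deg g.
Proof.
move=> nz_g ann_g; rewrite /AI; have := mem_index_enum g.
elim: index_enum => //= h r IH; rewrite inE big_cons => /predU1P[<- | r_g].
  by rewrite nz_g ann_g geq_minl.
by case: ifP => _; rewrite ?geq_min IH ?orbT.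
Qed.

(* f itself annihilates f + 1. *)
Lemma AI_le_deg n (f : boolfun n) : f != [ffun => false] -> AI f <= deg f.
Proof.
move=> nz_f; apply: AI_le nz_f _.
by apply/orP; right; apply/forallP => x; rewrite ffunE; case: (f x).
Qed.

Section WeightProfile.

Variables (n : nat) (f : boolfun n) (G : nat -> bool).
Hypothesis fG : forall x, f x = G (wt x).

(* Low degree forces periodicity of the weight profile: the transform of
   G(. + 2^s) + G at k is that of G at k + 2^s, hence even. *)
Lemma low_degree_periodic s :
  deg f < 2 ^ s -> forall w, w + 2 ^ s <= n -> G (w + 2 ^ s) = G w.
Proof.
move=> deg_lt w le_wn.
pose D i := nat_of_bool (G (i + 2 ^ s)) + G i.
have evenD k : k <= n - 2 ^ s -> ~~ odd (binsum k D).
  rewrite leq_subRL ?(leq_trans (leq_addl _ _) le_wn) // addnC => le_kn.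
  apply: contraTN deg_lt => odd_k; rewrite -leqNgt.
  apply: leq_trans (leq_addl k _) (deg_weight_ge fG le_kn _).
  by rewrite binsum_shift_pow2 -oddD -binsumD.
have := binsum_even_inv evenD (w := w).
rewrite leq_subRL ?(leq_trans (leq_addl _ _) le_wn) // addnC => /(_ le_wn).
by rewrite /D oddD !oddb; case: (G _); case: (G w).
Qed.

Lemma periodic_mod P : 0 < P -> (forall w, w + P <= n -> G (w + P) = G w) ->
  forall w, w <= n -> G w = G (w %% P).
Proof.
move=> P_gt0 perG; elim/ltn_ind => w IH le_wn.
case: (ltnP w P) => [lt_wP | le_Pw]; first by rewrite modn_small.
have eq_w : w = (w - P) + P by rewrite subnK.
have lt_w : w - P < w by rewrite ltn_subrL P_gt0 (leq_trans P_gt0 le_Pw).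
by rewrite eq_w modnDr perG -?eq_w // IH // (leq_trans (ltnW lt_w)).
Qed.

(* If G is constant b on a residue class r mod 2^s, the indicator of that
   class annihilates f or f + 1 and has degree < 2^s. *)
Lemma AI_residue_class s r b : r < 2 ^ s -> r <= n ->
  (forall w, w <= n -> w %% 2 ^ s = r -> G w = b) -> AI f <= (2 ^ s).-1.
Proof.
move=> lt_r le_rn constG.
pose I w := w %% 2 ^ s == r.
pose g : boolfun n := [ffun x => I (wt x)].
have gI x : g x = I (wt x) by rewrite ffunE.
apply: (@leq_trans (deg g)).
  apply: AI_le.
    apply/eqP => /(congr1 (fun h : boolfun n => h (lowvec n r))).
    by rewrite !ffunE wt_lowvec // /I modn_small // eqxx.
  apply/orP; case: b constG => constG; [right | left]; apply/forallP => x;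
    rewrite ?ffunE fG; apply/negP => /andP[/eqP Ix];
    by rewrite (constG _ (wt_le x) Ix).
apply: (deg_weight_le gI) => k lt_k _.
have le_k : 2 ^ s <= k by move: lt_k; rewrite prednK ?expn_gt0.
by rewrite -(subnK le_k); apply: binsum_periodic_even => i; rewrite /I modnDr.
Qed.

Lemma deg_antiperiodic s :
  (forall w, w + 2 ^ s <= n -> G (w + 2 ^ s) = ~~ G w) -> deg f <= 2 ^ s.
Proof.
move=> antiG; apply: (deg_weight_le fG) => k lt_k le_kn.
have le_k := ltnW lt_k; rewrite -(subnK le_k) binsum_shift_pow2 -oddD -binsumD.
rewrite (eq_binsum (F2 := fun _ => 1)) ?binsum1 ?oddX ?orbF -?lt0n ?subn_gt0 //.
move=> i le_i; rewrite antiG; first by case: (G i).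
by apply: leq_trans le_kn; rewrite -(subnK le_k) leq_add2r.
Qed.

Lemma antiperiodic_halves s :
  (forall w, w <= n -> G w = G (w %% 2 ^ s.+1)) ->
  (forall r, r < 2 ^ s -> G r != G (r + 2 ^ s)) ->
  forall w, w + 2 ^ s <= n -> G (w + 2 ^ s) = ~~ G w.
Proof.
move=> modG anti w le_wn; have le_w := leq_trans (leq_addr _ _) le_wn.
rewrite modG // [G w]modG // !modn_pow2S modnDr divnDr ?dvdnn //.
rewrite divnn expn_gt0 addn1 /=.
have := anti _ (ltn_pmod w (expn_gt0 2 s)).
by case: odd; rewrite /= ?mul0n ?mul1n ?add0n addnC; case: (G _); case: (G _).
Qed.

Lemma AI_periodic t : 2 ^ t <= n ->
  (forall w, w + 2 ^ t <= n -> G (w + 2 ^ t) = G w) -> AI f <= (2 ^ t)./2.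
Proof.
move=> le_Pn perG; have modG := periodic_mod (expn_gt0 2 t) perG.
case: t le_Pn perG modG => [|s] le_Pn perG modG.
  apply: (@AI_residue_class 0 0 (G 0)) => // w le_wn _.
  by rewrite modG // modn1.
have le_Qn : 2 ^ s <= n by apply: leq_trans le_Pn; rewrite leq_exp2l.
rewrite expnS mul2n doubleK.
have [/existsP[r /eqP eq_r] | /existsPn anti] :=
  boolP [exists r : 'I_(2 ^ s), G r == G (r + 2 ^ s)].
  apply: leq_trans (leq_pred _).
  apply: (@AI_residue_class s r (G r)) => //; first exact: ltnW (leq_trans _ le_Qn).
  move=> w le_wn eq_wr; rewrite modG // modn_pow2S eq_wr.
  by case: odd; rewrite ?mul0n ?add0n // mul1n addnC eq_r.
have antiG := antiperiodic_halves modG (fun r lt_r => anti (Ordinal lt_r)).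
apply: leq_trans (AI_le_deg _) (deg_antiperiodic antiG).
have Gf w : w <= n -> G w = f (lowvec n w) by move=> le_wn; rewrite fG wt_lowvec.
apply/eqP => f0; have := antiG 0 le_Qn.
by rewrite add0n !Gf // f0 !ffunE.
Qed.

End WeightProfile.

Theorem corollary9 (n : nat) (f : boolfun n) :
  2 <= n -> symmetricb f -> AI f = uphalf n ->
  2 ^ trunc_log 2 (n - 1) <= deg f.
Proof.
move=> le_2n symf AI_f; set t := trunc_log 2 (n - 1).
have le_Pn1 : 2 ^ t <= n - 1 by apply: trunc_logP; rewrite ?subn_gt0.
have le_Pn : 2 ^ t <= n := leq_trans le_Pn1 (leq_subr 1 n).
pose G k := f (lowvec n k).
have fG x : f x = G (wt x) by apply: symmetric_wt; rewrite ?wt_lowvec ?wt_le.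
rewrite leqNgt; apply/negP => deg_lt.
have := AI_periodic fG le_Pn (low_degree_periodic fG deg_lt).
rewrite AI_f leqNgt ltn_half_double uphalfK => /negP; apply.
apply: leq_ltn_trans le_Pn1 (leq_trans _ (leq_addl (odd n) n)).
by rewrite ltn_subrL (leq_trans _ le_2n).
Qed.
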